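(* Let $d\ge2$, $\mathcal{X}=\{0,\dots,d-1\}$, and let $P_{XABC}$ be a probability distribution on $\mathcal{X}\times\{0,1\}^3$. Define $\omega_{\mathrm{c}}=\max_{f,g,h}\sum_{x,a,b,c}P_{XABC}(x,a,b,c)\,\delta[f(a)=g(b)=h(c)=x]$, maximized over functions $f,g,h\colon\{0,1\}\to\mathcal{X}$. Then $$\omega_{\mathrm{c}}=\max_{s,t\in\mathcal{X},\,s\ne t}\max\left\{\begin{matrix}P_X(s),\\ P_{XABC}(s,0,0,0)+P_{XABC}(t,1,1,1),\\ P_{XABC}(s,1,0,0)+P_{XABC}(t,0,1,1),\\ P_{XABC}(s,0,1,0)+P_{XABC}(t,1,0,1),\\ P_{XABC}(s,0,0,1)+P_{XABC}(t,1,1,0)\end{matrix}\right\}.$$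
   Context: $\delta$ is the indicator function; $P_X$ is the marginal of $P_{XABC}$ on $\mathcal{X}$. $\omega_{\mathrm{c}}$ is the optimal classical winning probability of the three-player LSSD game in which a referee samples $(x,a,b,c)\sim P_{XABC}$, sends $a,b,c$ to three non-communicating players, who win iff all three output $x$. *)

From mathcomp Require Import all_boot all_order all_algebra.
Set Implicit Arguments. Unset Strict Implicit. Unset Printing Implicit Defensive.
Import Order.TTheory GRing.Theory Num.Theory.
Local Open Scope ring_scope.

(* Bits {0,1} are encoded as bool: false = 0, true = 1.
   A distribution P_{XABC} on X x {0,1}^3 with X = 'I_d. *)

Definition is_distr (R : realFieldType) (d : nat)
  (P : 'I_d -> bool -> bool -> bool -> R) : Prop :=
  (forall x a b c, 0 <= P x a b c) /\
  \sum_(x : 'I_d) \sum_(a : bool) \sum_(b : bool) \sum_(c : bool) P x a b c = 1.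

Definition marginalX (R : realFieldType) (d : nat)
  (P : 'I_d -> bool -> bool -> bool -> R) (x : 'I_d) : R :=
  \sum_(a : bool) \sum_(b : bool) \sum_(c : bool) P x a b c.

Definition win_prob (R : realFieldType) (d : nat)
  (P : 'I_d -> bool -> bool -> bool -> R) (f g h : bool -> 'I_d) : R :=
  \sum_(x : 'I_d) \sum_(a : bool) \sum_(b : bool) \sum_(c : bool)
     P x a b c * ((f a == x) && (g b == x) && (h c == x))%:R.

(* optimal classical winning probability: max over all f, g, h : {0,1} -> X.
   (All values are >= 0 for a distribution, so 0 is a neutral start.) *)
Definition omega_c (R : realFieldType) (d : nat)
  (P : 'I_d -> bool -> bool -> bool -> R) : R :=
  \big[Num.max/0]_(fgh : {ffun bool -> 'I_d} * {ffun bool -> 'I_d} * {ffun bool -> 'I_d})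
     win_prob P fgh.1.1 fgh.1.2 fgh.2.

From mathcomp Require Import all_boot all_order all_algebra.
Set Implicit Arguments. Unset Strict Implicit. Unset Printing Implicit Defensive.
Import Order.TTheory GRing.Theory Num.Theory.
Local Open Scope ring_scope.

(* The players win on (a, b, c) exactly when f a = g b = h c, and the answer is
   then f a.  If one of f, g, h is constant with value s, only x = s is ever
   won, so the strategy wins with probability at most P_X(s); the constant
   strategy s attains this.  Otherwise f, g, h are injective on {0,1}, so a
   winning triple (a, b, c) determines all others: only it and its bitwise
   complement can be won, with different answers s <> t.  This bounds the
   value by P(s,a,b,c) + P(t,~a,~b,~c), which the strategy sending a, b, c to s
   and their complements to t attains. *)

Lemma bool_inj (T : eqType) (f : bool -> T) : f false != f true -> injective f.
Proof. by move=> /negbTE ne [] [] // /eqP; rewrite ?ne // eq_sym ne. Qed.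

Lemma eq_matched (A B T : eqType) (f : A -> T) (g : B -> T) a a' b b' :
  injective f -> injective g -> g b = f a -> g b' = f a' -> (b' == b) = (a' == a).
Proof. by move=> fI gI e e'; rewrite -(inj_eq gI) e e' (inj_eq fI). Qed.

Section Strategies.

Variable T : eqType.
Implicit Types f g h : bool -> T.

Definition wins f g h a b c := (g b == f a) && (h c == f a).

Lemma wins_matched f g h a b c a' b' c' :
  injective f -> injective g -> injective h ->
  wins f g h a b c -> wins f g h a' b' c' ->
  ((b' == b) == (a' == a)) && ((c' == c) == (a' == a)).
Proof.
move=> fI gI hI /andP[/eqP gb /eqP hc] /andP[/eqP gb' /eqP hc'].
by rewrite (eq_matched fI gI gb gb') (eq_matched fI hI hc hc') !eqxx.
Qed.

End Strategies.

Section WinningProbability.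

Variables (R : realFieldType) (d : nat) (P : 'I_d -> bool -> bool -> bool -> R).
Implicit Types (f g h : bool -> 'I_d) (s t : 'I_d).

Definition win_term f g h a b c := if wins f g h a b c then P (f a) a b c else 0.

Lemma win_probE f g h :
  win_prob P f g h = \sum_a \sum_b \sum_c win_term f g h a b c.
Proof.
rewrite /win_prob exchange_big; apply: eq_bigr => a _.
rewrite exchange_big; apply: eq_bigr => b _.
rewrite exchange_big; apply: eq_bigr => c _.
rewrite (bigD1 (f a)) //= eqxx big1 ?addr0 => [|x /negbTE fx]; last first.
  by rewrite [f a == x]eq_sym fx mulr0.
by rewrite /win_term /wins; case: ifP; rewrite ?mulr1 ?mulr0.
Qed.

Lemma win_prob_le_omega_c f g h : win_prob P f g h <= omega_c P.
Proof.
have -> : win_prob P f g h = win_prob P (finfun f) (finfun g) (finfun h).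
  by rewrite /win_prob; do 4 (apply: eq_bigr => ? _); rewrite !ffunE.
exact: (le_bigmax_cond _ (j := (finfun f, finfun g, finfun h))).
Qed.

Lemma win_prob_const s : win_prob P (fun=> s) (fun=> s) (fun=> s) = marginalX P s.
Proof. by rewrite win_probE; do 3 (apply: eq_bigr => ? _); rewrite /win_term /wins eqxx. Qed.

Lemma win_prob_inj f g h a b c :
  injective f -> injective g -> injective h -> wins f g h a b c ->
  win_prob P f g h = win_term f g h a b c + win_term f g h (~~ a) (~~ b) (~~ c).
Proof.
move=> fI gI hI w.
have only_pair a' b' c' : win_term f g h a' b' c' =
    if ((b' == b) == (a' == a)) && ((c' == c) == (a' == a))
    then win_term f g h a' b' c' else 0.
  rewrite /win_term; case w': (wins f g h a' b' c'); last by case: ifP.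
  by rewrite (wins_matched fI gI hI w w').
rewrite win_probE.
under eq_bigr do under eq_bigr do under eq_bigr do rewrite only_pair.
by rewrite !big_bool; case: a b c {w only_pair} => [] [] [] /=;
  rewrite ?(addr0, add0r) // addrC.
Qed.

Definition pair_strategy s t (a : bool) : bool -> 'I_d :=
  fun a' => if a' == a then s else t.

Lemma pair_strategy_inj s t a : s != t -> injective (pair_strategy s t a).
Proof. by move=> st; apply: bool_inj; case: a; rewrite /pair_strategy //= eq_sym. Qed.

Lemma win_prob_pair_strategy s t a b c : s != t ->
  win_prob P (pair_strategy s t a) (pair_strategy s t b) (pair_strategy s t c) =
  P s a b c + P t (~~ a) (~~ b) (~~ c).
Proof.
move=> st; have inj x := @pair_strategy_inj s t x st.
have neg x : (~~ x == x) = false by case: x.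
rewrite (win_prob_inj (inj a) (inj b) (inj c) (a := a) (b := b) (c := c));
  last by rewrite /wins /pair_strategy !eqxx.
by rewrite /win_term /wins /pair_strategy !neg !eqxx.
Qed.

Definition omega_c_closed_form : R :=
  \big[Num.max/0]_(st : 'I_d * 'I_d | st.1 != st.2)
    Num.max (marginalX P st.1)
    (Num.max (P st.1 false false false + P st.2 true true true)
    (Num.max (P st.1 true false false + P st.2 false true true)
    (Num.max (P st.1 false true false + P st.2 true false true)
             (P st.1 false false true + P st.2 true true false)))).

Lemma closed_form_le_omega_c : omega_c_closed_form <= omega_c P.
Proof.
apply: bigmax_le => [|[s t] /= st]; first exact: bigmax_ge_id.
rewrite !ge_max -win_prob_const win_prob_le_omega_c /=.
by rewrite -!(win_prob_pair_strategy _ _ _ st) !win_prob_le_omega_c.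
Qed.

Lemma pair_le_closed_form s t a b c : s != t ->
  P s a b c + P t (~~ a) (~~ b) (~~ c) <= omega_c_closed_form.
Proof.
(* Each complementary pair is listed once, with the bits of s of weight <= 1. *)
wlog le1 : s t a b c / (a + b + c <= 1)%N => [wlog_w st|st].
  have [le1|gt1] := leqP (a + b + c) 1; first exact: wlog_w.
  have := wlog_w t s (~~ a) (~~ b) (~~ c); rewrite !negbK addrC; apply.
    by case: a b c gt1 => [] [] [].
  by rewrite eq_sym.
apply: (bigmax_sup (s, t)) => //=.
by case: a b c le1 => [] [] [] //= _; rewrite !le_max lexx !orbT.
Qed.

Hypothesis d_ge2 : (2 <= d)%N.

Lemma marginalX_le_closed_form s : marginalX P s <= omega_c_closed_form.
Proof.
have [t st] : exists t, s != t.
  have d_gt0 : (0 < d)%N := ltnW d_ge2.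
  case: (eqVneq s (Ordinal d_gt0)) => [->|]; last by exists (Ordinal d_gt0).
  by exists (Ordinal d_ge2).
apply: (bigmax_sup (s, t)) => //=.
by rewrite le_max lexx.
Qed.

Hypothesis P_ge0 : forall x a b c, 0 <= P x a b c.

Lemma win_prob_le_marginalX f g h s :
  (forall a b c, wins f g h a b c -> f a = s) -> win_prob P f g h <= marginalX P s.
Proof.
move=> answer_s; rewrite win_probE /marginalX.
do 3 (apply: ler_sum => ? _); rewrite /win_term.
by case: ifP => [/answer_s ->|_].
Qed.

Lemma win_prob_le_closed_form f g h : win_prob P f g h <= omega_c_closed_form.
Proof.
have le_marg s : (forall a b c, wins f g h a b c -> f a = s) ->
    win_prob P f g h <= omega_c_closed_form.
  by move=> /win_prob_le_marginalX /le_trans; apply; apply: marginalX_le_closed_form.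
have [ef|/bool_inj fI] := eqVneq (f false) (f true).
  by apply: (le_marg (f false)) => -[] b c _; rewrite ?ef.
have [eg|/bool_inj gI] := eqVneq (g false) (g true).
  by apply: (le_marg (g false)) => a [] c /andP[/eqP <- _]; rewrite ?eg.
have [eh|/bool_inj hI] := eqVneq (h false) (h true).
  by apply: (le_marg (h false)) => a b [] /andP[_ /eqP <-]; rewrite ?eh.
have [[[a b] c] /= w|none] := pickP (fun w => wins f g h w.1.1 w.1.2 w.2).
  have fa : f a != f (~~ a) by rewrite (inj_eq fI); case: a {w}.
  rewrite (win_prob_inj fI gI hI w).
  apply: le_trans _ (pair_le_closed_form a b c fa).
  by apply: lerD; rewrite /win_term; case: ifP.
by apply: (le_marg (f false)) => a b c w; have := none (a, b, c); rewrite /= w.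
Qed.

Lemma omega_c_le_closed_form : omega_c P <= omega_c_closed_form.
Proof.
apply: bigmax_le => [|[[f g] h] _]; first exact: bigmax_ge_id.
exact: win_prob_le_closed_form.
Qed.

End WinningProbability.

Theorem mainTheorem8 (R : realFieldType) (d : nat) (hd : (2 <= d)%N)
  (P : 'I_d -> bool -> bool -> bool -> R) (hP : is_distr P) :
  omega_c P =
  \big[Num.max/0]_(st : 'I_d * 'I_d | st.1 != st.2)
    Num.max (marginalX P st.1)
    (Num.max (P st.1 false false false + P st.2 true true true)
    (Num.max (P st.1 true false false + P st.2 false true true)
    (Num.max (P st.1 false true false + P st.2 true false true)
             (P st.1 false false true + P st.2 true true false)))).
Proof.
have [P_ge0 _] := hP.
apply/le_anti/andP; split.
- exact: (omega_c_le_closed_form hd P_ge0).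
- exact: closed_form_le_omega_c.
Qed.
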